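(* For all types $A$, $B$, $C$: if $A \simeq B$ and $B \equiv C$, then $A \simeq C$.
   Context: Types and rows share one grammar: $A,B,C,\rho ::= X \mid \alpha \mid \star \mid \iota \mid A\to B \mid \forall X{:}K.\,A \mid [\rho] \mid \langle\rho\rangle \mid \cdot \mid \ell{:}A;\rho$, where $X$ ranges over type variables (bound by $\forall$), $\alpha$ over type names, $\star$ is the dynamic type (also serving as the dynamic row), $\iota$ over base types, $[\rho]$ and $\langle\rho\rangle$ are record and variant types, $\cdot$ is the empty row, $\ell$ ranges over labels, and $K\in\{\mathsf T,\mathsf R\}$ is a kind. Types are identified up to renaming of bound variables; $\mathit{ftv}(A)$ is the set of free type variables. Row matching $\rho \triangleright_\ell A,\rho'$ is defined by: $(\ell{:}A;\rho)\triangleright_\ell A,\rho$; if $\ell'\neq\ell$ and $\rho\triangleright_\ell A,\rho'$ then $(\ell'{:}B;\rho)\triangleright_\ell A,(\ell'{:}B;\rho')$; and $\star\triangleright_\ell \star,\star$. $\mathbf{QPoly}(A)$ holds iff $A$ is not of the form $\forall X{:}K.\,B$ and $\star$ occurs in $A$. Row concatenation $\rho_1\odot\rho_2$ is defined only when $\rho_1=\ell_1{:}A_1;\dots;\ell_n{:}A_n;\cdot$, and then equals $\ell_1{:}A_1;\dots;\ell_n{:}A_n;\rho_2$. $\mathit{dom}(\rho)$ is the set of labels in the top-level label prefix of $\rho$. A row $\rho$ ends with $\star$ if $\rho=\rho'\odot\star$ for some $\rho'$. Type equivalence $\equiv$ is the least equivalence relation that is a congruence for $\to$, $\forall X{:}K.\,-$,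 $[-]$, $\langle-\rangle$ and $\ell{:}-;-$, and contains $\ell{:}A;\ell'{:}B;\rho \equiv \ell'{:}B;\ell{:}A;\rho$ whenever $\ell\neq\ell'$. Consistency $\simeq$ is defined inductively: $A\simeq A$; $\star\simeq A$; $A\simeq\star$; $A_1\to A_2\simeq B_1\to B_2$ if $A_1\simeq B_1$ and $A_2\simeq B_2$; $\forall X{:}K.A\simeq\forall X{:}K.B$ if $A\simeq B$; $\forall X{:}K.A\simeq B$ if $\mathbf{QPoly}(B)$, $X\notin\mathit{ftv}(B)$ and $A\simeq B$; $A\simeq\forall X{:}K.B$ if $\mathbf{QPoly}(A)$, $X\notin\mathit{ftv}(A)$ and $A\simeq B$; $[\rho_1]\simeq[\rho_2]$ and $\langle\rho_1\rangle\simeq\langle\rho_2\rangle$ if $\rho_1\simeq\rho_2$; $\ell{:}A;\rho_1\simeq B$ if $B\triangleright_\ell B',\rho_2$, $A\simeq B'$ and $\rho_1\simeq\rho_2$; $A\simeq \ell{:}B;\rho_2$ if $A\triangleright_\ell A',\rho_1$, $A'\simeq B$ and $\rho_1\simeq\rho_2$. *)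

(* Gradual row-polymorphic types in locally nameless /
   de Bruijn style: bound type variables X are de Bruijn indices, so
   types are identified up to alpha-renaming by construction. *)
From Stdlib Require Import Arith.

Inductive kind : Type := KT | KR.

Inductive ty : Type :=
  | TVar  : nat -> ty
  | TName : nat -> ty
  | TDyn  : ty                   (* dynamic type / dynamic row  ★ *)
  | TBase : nat -> ty
  | TArr  : ty -> ty -> ty
  | TAll  : kind -> ty -> ty     (* forall X:K. A  (binds index 0) *)
  | TRec  : ty -> ty
  | TVnt  : ty -> ty
  | TNil  : ty
  | TCons : nat -> ty -> ty -> ty.

Fixpoint shift (c : nat) (A : ty) : ty :=
  match A with
  | TVar k => if k <? c then TVar k else TVar (S k)
  | TName a => TName a
  | TDyn => TDyn
  | TBase i => TBase i
  | TArr A1 A2 => TArr (shift c A1) (shift c A2)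
  | TAll K B => TAll K (shift (S c) B)
  | TRec r => TRec (shift c r)
  | TVnt r => TVnt (shift c r)
  | TNil => TNil
  | TCons l A1 r => TCons l (shift c A1) (shift c r)
  end.

Fixpoint dyn_occurs (A : ty) : Prop :=
  match A with
  | TDyn => True
  | TArr A1 A2 => dyn_occurs A1 \/ dyn_occurs A2
  | TAll _ B => dyn_occurs B
  | TRec r | TVnt r => dyn_occurs r
  | TCons _ A1 r => dyn_occurs A1 \/ dyn_occurs r
  | _ => False
  end.

Definition QPoly (A : ty) : Prop :=
  (forall K B, A <> TAll K B) /\ dyn_occurs A.

Inductive rmatch : ty -> nat -> ty -> ty -> Prop :=
  | rm_head : forall l A r, rmatch (TCons l A r) l A r
  | rm_skip : forall l l' A B r r',
      l' <> l -> rmatch r l A r' -> rmatch (TCons l' B r) l A (TCons l' B r')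
  | rm_dyn : forall l, rmatch TDyn l TDyn TDyn.

Inductive tequiv : ty -> ty -> Prop :=
  | eq_refl : forall A, tequiv A A
  | eq_sym : forall A B, tequiv A B -> tequiv B A
  | eq_trans : forall A B C, tequiv A B -> tequiv B C -> tequiv A C
  | eq_arr : forall A1 A2 B1 B2,
      tequiv A1 B1 -> tequiv A2 B2 -> tequiv (TArr A1 A2) (TArr B1 B2)
  | eq_all : forall K A B, tequiv A B -> tequiv (TAll K A) (TAll K B)
  | eq_rec : forall r1 r2, tequiv r1 r2 -> tequiv (TRec r1) (TRec r2)
  | eq_vnt : forall r1 r2, tequiv r1 r2 -> tequiv (TVnt r1) (TVnt r2)
  | eq_cons : forall l A B r1 r2,
      tequiv A B -> tequiv r1 r2 -> tequiv (TCons l A r1) (TCons l B r2)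
  | eq_swap : forall l l' A B r,
      l <> l' -> tequiv (TCons l A (TCons l' B r)) (TCons l' B (TCons l A r)).

Inductive consistent : ty -> ty -> Prop :=
  | c_refl : forall A, consistent A A
  | c_dynL : forall A, consistent TDyn A
  | c_dynR : forall A, consistent A TDyn
  | c_arr : forall A1 A2 B1 B2,
      consistent A1 B1 -> consistent A2 B2 ->
      consistent (TArr A1 A2) (TArr B1 B2)
  | c_all : forall K A B, consistent A B -> consistent (TAll K A) (TAll K B)
  (* forall X:K.A ~ B  if QPoly B, X notin ftv(B), A ~ B  (B weakened under X) *)
  | c_allL : forall K A B,
      QPoly B -> consistent A (shift 0 B) -> consistent (TAll K A) B
  | c_allR : forall K A B,
      QPoly A -> consistent (shift 0 A) B -> consistent A (TAll K B)
  | c_rec : forall r1 r2, consistent r1 r2 -> consistent (TRec r1) (TRec r2)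
  | c_vnt : forall r1 r2, consistent r1 r2 -> consistent (TVnt r1) (TVnt r2)
  | c_consL : forall l A r1 B B' r2,
      rmatch B l B' r2 -> consistent A B' -> consistent r1 r2 ->
      consistent (TCons l A r1) B
  | c_consR : forall l A A' r1 B r2,
      rmatch A l A' r1 -> consistent A' B -> consistent r1 r2 ->
      consistent A (TCons l B r2).

(* Type equivalence is generated by swapping two adjacent fields with distinct
   labels somewhere inside a type, and this one-step relation is symmetric; so
   it suffices that consistency is preserved by one swap on its right-hand side.  The only real work is
   when the swapped fields are the ones peeled off by a [c_consR] rule: there
   one needs that consistency may be checked field by field, i.e. two rows that
   match a common label [l] with consistent field types and consistent
   remainders are consistent.  That is proved by induction on size, commuting
   matches of distinct labels to bring the fields of the two rows face to face. *)
From Stdlib Require Import Arith Lia Relations.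

Inductive step : ty -> ty -> Prop :=
  | s_swap : forall l l' A B r, l <> l' ->
      step (TCons l A (TCons l' B r)) (TCons l' B (TCons l A r))
  | s_arrL : forall A A' B, step A A' -> step (TArr A B) (TArr A' B)
  | s_arrR : forall A B B', step B B' -> step (TArr A B) (TArr A B')
  | s_all : forall K A A', step A A' -> step (TAll K A) (TAll K A')
  | s_rec : forall A A', step A A' -> step (TRec A) (TRec A')
  | s_vnt : forall A A', step A A' -> step (TVnt A) (TVnt A')
  | s_consH : forall l A A' r, step A A' -> step (TCons l A r) (TCons l A' r)
  | s_consT : forall l A r r', step r r' -> step (TCons l A r) (TCons l A r').

Notation steps := (clos_refl_trans ty step).

Lemma step_sym : forall A B, step A B -> step B A.
Proof. induction 1; constructor; auto. Qed.

Lemma steps_sym : forall A B, steps A B -> steps B A.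
Proof. induction 1; eauto using rt_step, rt_refl, rt_trans, step_sym. Qed.

Lemma steps_map (f : ty -> ty) :
  (forall A B, step A B -> step (f A) (f B)) ->
  forall A B, steps A B -> steps (f A) (f B).
Proof. intros Hf; induction 1; eauto using rt_step, rt_refl, rt_trans. Qed.

Lemma tequiv_steps : forall A B, tequiv A B -> steps A B.
Proof.
  induction 1.
  - apply rt_refl.
  - now apply steps_sym.
  - eapply rt_trans; eauto.
  - apply rt_trans with (TArr B1 A2).
    + apply (steps_map (fun X => TArr X A2)); auto using s_arrL.
    + apply (steps_map (fun X => TArr B1 X)); auto using s_arrR.
  - apply (steps_map (TAll K)); auto using s_all.
  - apply (steps_map TRec); auto using s_rec.
  - apply (steps_map TVnt); auto using s_vnt.
  - apply rt_trans with (TCons l B r1).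
    + apply (steps_map (fun X => TCons l X r1)); auto using s_consH.
    + apply (steps_map (fun X => TCons l B X)); auto using s_consT.
  - apply rt_step, s_swap; auto.
Qed.

Lemma step_shift : forall A B, step A B -> forall c, step (shift c A) (shift c B).
Proof. induction 1; intros; simpl; constructor; auto. Qed.

Lemma dyn_occurs_step : forall A B, step A B -> dyn_occurs A -> dyn_occurs B.
Proof. induction 1; simpl; tauto. Qed.

Lemma QPoly_step : forall A B, step A B -> QPoly A -> QPoly B.
Proof.
  intros A B HAB [Hnot_all Hdyn]; split.
  - intros K C ->; inversion HAB; subst; eapply Hnot_all; eauto.
  - eapply dyn_occurs_step; eauto.
Qed.

Lemma step_consistent : forall A B, step A B -> consistent A B.
Proof.
  induction 1; eauto using consistent, rmatch.
Qed.

Lemma rmatch_step : forall B l B' r, rmatch B l B' r -> forall C, step B C ->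
  exists C' r', rmatch C l C' r' /\ (B' = C' \/ step B' C') /\ (r = r' \/ step r r').
Proof.
  induction 1 as [l A r | l l' A B r r' Hl Hr IH | l]; intros C HS;
    inversion HS; subst.
  - exists A, (TCons l' B r0); auto using rmatch, not_eq_sym.
  - exists A', r; auto using rmatch.
  - exists A, r'; auto using rmatch.
  - inversion Hr; subst.
    + exists A, (TCons l' B r'); auto using rmatch.
    + do 2 eexists; split; [apply rm_skip; [| apply rm_skip] |]; eauto using step.
  - exists A, (TCons l' A' r'); auto 6 using rmatch, step.
  - match goal with H : step r _ |- _ => destruct (IH _ H) as (C' & r'' & Hm & HC & Hrr) end.
    exists C', (TCons l' B r''); repeat split; auto using rmatch.
    destruct Hrr; [left; congruence | right; auto using step].
Qed.

Lemma rmatch_comm : forall X l P Q, rmatch X l P Q -> forall a Z R, a <> l ->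
  rmatch Q a Z R -> exists Y, rmatch X a Z Y /\ rmatch Y l P R.
Proof.
  induction 1 as [l A r | l l' A B r r' Hl Hr IH | l]; intros a Z R Ha HQ.
  - eauto using rmatch.
  - inversion HQ; subst.
    + eauto using rmatch.
    + match goal with H : rmatch r' a Z _ |- _ => destruct (IH _ _ _ Ha H) as (Y & HX & HY) end.
      eauto using rmatch.
  - inversion HQ; subst; eauto using rmatch.
Qed.

Fixpoint tsize (A : ty) : nat :=
  match A with
  | TArr A1 A2 => S (tsize A1 + tsize A2)
  | TAll _ B => S (tsize B)
  | TRec r | TVnt r => S (tsize r)
  | TCons _ A1 r => S (tsize A1 + tsize r)
  | _ => 1
  end.

Lemma rmatch_tsize : forall X l P Q, rmatch X l P Q -> tsize Q <= tsize X.
Proof. induction 1; simpl; lia. Qed.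

Lemma consistent_cons_inv : forall a Z r c W s,
  consistent (TCons a Z r) (TCons c W s) ->
  (exists Z' s', rmatch (TCons c W s) a Z' s' /\ consistent Z Z' /\ consistent r s') \/
  (exists W' r', rmatch (TCons a Z r) c W' r' /\ consistent W' W /\ consistent r' s).
Proof.
  intros a Z r c W s H; inversion H; subst; eauto 7 using consistent, rmatch.
Qed.

Lemma consistent_rmatch : forall A C l A' C' r1 r3,
  rmatch A l A' r1 -> rmatch C l C' r3 ->
  consistent A' C' -> consistent r1 r3 -> consistent A C.
Proof.
  intros A C; remember (tsize A + tsize C) as n eqn:Hn; revert A C Hn.
  induction n as [n IH] using lt_wf_ind.
  intros A C Hn l A' C' r1 r3 HA HC HAC Hr.
  destruct HA as [| l a A' Z ra ra' Hal HA |]; [eapply c_consL; eauto | | apply c_dynL].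
  destruct HC as [| l c C' W rc rc' Hcl HC |]; [eapply c_consR; eauto using rmatch | | apply c_dynR].
  destruct (consistent_cons_inv _ _ _ _ _ _ Hr) as [(Z' & s' & Hm & HZ & Hs) | (W' & r' & Hm & HW & Hs)].
  - destruct (rmatch_comm _ _ _ _ (rm_skip _ _ _ _ _ _ Hcl HC) _ _ _ Hal Hm) as (Y & HCY & HY).
    eapply c_consL; [exact HCY | exact HZ |].
    pose proof (rmatch_tsize _ _ _ _ HCY); simpl in *.
    eapply (IH (tsize ra + tsize Y)); eauto; lia.
  - destruct (rmatch_comm _ _ _ _ (rm_skip _ _ _ _ _ _ Hal HA) _ _ _ Hcl Hm) as (Y & HAY & HY).
    eapply c_consR; [exact HAY | exact HW |].
    pose proof (rmatch_tsize _ _ _ _ HAY); simpl in *.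
    eapply (IH (tsize Y + tsize rc)); eauto; lia.
Qed.

Lemma consistent_step_r : forall A B, consistent A B -> forall C, step B C -> consistent A C.
Proof.
  induction 1 as [B | B | A | | | K A B HB HAB IH | | | | l A r1 B B' r2 HB HAB IHA Hr IHr
    | l A A' r1 B r2 HA HAB IHA Hr IHr]; intros C HS;
    try solve [inversion HS; subst; eauto using consistent].
  - now apply step_consistent.
  - apply c_allL; eauto using QPoly_step, step_shift.
  - destruct (rmatch_step _ _ _ _ HB _ HS) as (C' & r' & HC & [<- | HBC] & [<- | Hrr]);
      eapply c_consL; eauto.
  - inversion HS; subst; [| eapply c_consR; eauto ..].
    eapply consistent_rmatch; eauto using rmatch.
Qed.

Theorem mainTheorem4 : forall A B C : ty,
  consistent A B -> tequiv B C -> consistent A C.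
Proof.
  intros A B C HAB HBC.
  apply tequiv_steps in HBC.
  revert A HAB; induction HBC; eauto using consistent_step_r.
Qed.
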